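(* Let $n\ge1$, let $T\in\mathrm{URL}_n$, let $\sigma\in\mathrm{RS}(T)$ and $\tau=\Omega(\sigma)$. Then $\tau\in\mathrm{And}^{II}(T)$ and \begin{align*} \mathrm{ides}(\tau)&=\mathrm{ides}(\sigma),\\ \mathrm{imaj}(\tau)&=\mathrm{imaj}(\sigma)+\mathrm{ides}(\sigma),\\ \mathrm{inv}(\tau)&=\mathrm{inv}(\sigma)+n-1-\mathrm{RLmin}(\sigma). \end{align*}
   Context: The map $\Psi$ sends a word $\pi$ of distinct integers to an increasing binary tree: $\Psi(\emptyset)=\emptyset$; otherwise write $\pi=\sigma\, i\,\tau$ with $i$ the least letter, and let $\Psi(\pi)$ have root $i$, left subtree $\Psi(\sigma)$, right subtree $\Psi(\tau)$; $\Psi$ is a bijection from permutations of $[n]$ to increasing binary trees labeled by $[n]$. $\mathrm{URL}_n$ is the set of unlabeled rooted binary trees with $n$ vertices in which no vertex has a left child but no right child. A permutation $\sigma$ of $[n]$ is simsun if $\sigma_n=n$ and for each $k\in[n]$ the subword formed by the letters $1,\dots,k$ has no index $i$ with $w_i>w_{i+1}>w_{i+2}$. Andr\'e II permutations: the empty word and one-letter words are Andr\'e II; a word $\sigma$ of $\ge2$ distinct integers, written $\sigma=\tau\,\min(\sigma)\,\tau'$, is Andr\'e II if $\tau,\tau'$ are Andr\'e II and the smallest letter of $\tau\tau'$ lies in $\tau'$. $\mathrm{RS}(T)$, $\mathrm{And}^{II}(T)$ denote the simsun, resp. Andr\'e II, permutations $\sigma$ of $[n]$ whose tree $\Psi(\sigma)$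 has shape $T$. The map $\Omega$: given $\sigma\in\mathrm{RS}(T)$, let $\hat T=\Psi(\sigma)$ and let $R=\{v_0<v_1<\cdots<v_m\}$ be the set of vertices of $\hat T$ not belonging to any left subtree (the root and the vertices reached from it by right-child steps only); $v_0=1$, $v_m=n$. Relabel vertex $v_0$ by $1$ and vertex $v_i$ by $v_{i-1}+1$ for $1\le i\le m$, and relabel every vertex with label $x\notin R$ by $x+1$. This gives an increasing binary tree $\widetilde T$ on $[n]$ of the same shape, and $\Omega(\sigma)=\Psi^{-1}(\widetilde T)$. Statistics of a permutation $\sigma$ of $[n]$: $\mathrm{IDes}(\sigma)$ is the set of $i\in[n-1]$ such that $i+1$ appears to the left of $i$; $\mathrm{ides}(\sigma)=|\mathrm{IDes}(\sigma)|$; $\mathrm{imaj}(\sigma)=\sum_{i\in\mathrm{IDes}(\sigma)}i$; $\mathrm{inv}(\sigma)$ is the number of pairs $i<j$ with $\sigma_i>\sigma_j$; $\mathrm{RLmin}(\sigma)$ is the number of $\sigma_i$ with $\sigma_j>\sigma_i$ for all $j>i$. *)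

From mathcomp Require Import all_boot.
Set Implicit Arguments. Unset Strict Implicit. Unset Printing Implicit Defensive.

Definition is_perm (n : nat) (s : seq nat) : Prop := perm_eq s (iota 1 n).

(* Unlabeled rooted binary trees (BLeaf = empty tree). *)
Inductive btree : Type := BLeaf | BNode of btree & btree.

Inductive ltree : Type := LLeaf | LNode of nat & ltree & ltree.

Fixpoint nverts (t : btree) : nat :=
  match t with BLeaf => 0 | BNode l r => (nverts l + nverts r).+1 end.

(* no vertex has a left child but no right child *)
Fixpoint url_ok (t : btree) : bool :=
  match t with
  | BLeaf => true
  | BNode l r =>
      match l, r with
      | BNode _ _, BLeaf => false
      | _, _ => url_ok l && url_ok r
      end
  end.

Definition URL (n : nat) (T : btree) : Prop := nverts T = n /\ url_ok T.

Fixpoint shape (t : ltree) : btree :=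
  match t with LLeaf => BLeaf | LNode _ l r => BNode (shape l) (shape r) end.

Definition wmin (w : seq nat) : nat := foldr minn (head 0 w) w.

(* The map Psi, by recursion with fuel (fuel = size of the word suffices). *)
Fixpoint psi_f (k : nat) (w : seq nat) : ltree :=
  match k with
  | 0 => LLeaf
  | k'.+1 =>
      if w is [::] then LLeaf else
      let i := index (wmin w) w in
      LNode (wmin w) (psi_f k' (take i w)) (psi_f k' (drop i.+1 w))
  end.
Definition Psi (w : seq nat) : ltree := psi_f (size w) w.

(* Psi^{-1}: reading an increasing binary tree in symmetric (in-)order. *)
Fixpoint inorder (t : ltree) : seq nat :=
  match t with LLeaf => [::] | LNode x l r => inorder l ++ x :: inorder r end.

Definition has_dd (w : seq nat) : bool :=
  has (fun i => (nth 0 w i > nth 0 w i.+1) && (nth 0 w i.+1 > nth 0 w i.+2))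
      (iota 0 (size w - 2)).

Definition simsun (n : nat) (s : seq nat) : Prop :=
  [/\ is_perm n s, nth 0 s n.-1 = n &
      forall k, 1 <= k <= n -> ~~ has_dd [seq x <- s | x <= k]].

(* Andre II words, recursion with fuel (fuel = size of the word suffices) *)
Fixpoint andre_f (k : nat) (w : seq nat) : bool :=
  match k with
  | 0 => true
  | k'.+1 =>
      if size w <= 1 then true else
      let i := index (wmin w) w in
      let a := take i w in
      let b := drop i.+1 w in
      [&& andre_f k' a, andre_f k' b & wmin (a ++ b) \in b]
  end.
Definition andreII (w : seq nat) : bool := andre_f (size w) w.

Definition RS (n : nat) (T : btree) (s : seq nat) : Prop :=
  simsun n s /\ shape (Psi s) = T.
Definition AndII (n : nat) (T : btree) (s : seq nat) : Prop :=
  [/\ is_perm n s, andreII s & shape (Psi s) = T].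

Fixpoint rspine (t : ltree) : seq nat :=
  match t with LLeaf => [::] | LNode x _ r => x :: rspine r end.
Fixpoint lmap (f : nat -> nat) (t : ltree) : ltree :=
  match t with LLeaf => LLeaf | LNode x l r => LNode (f x) (lmap f l) (lmap f r) end.
(* R = [:: v_0; v_1; ...; v_m] (increasing along the right spine) *)
Definition omega_lab (R : seq nat) (x : nat) : nat :=
  if x \in R then
    (if index x R is j.+1 then (nth 0 R j).+1 else 1)
  else x.+1.
Definition Omega (s : seq nat) : seq nat :=
  let t := Psi s in inorder (lmap (omega_lab (rspine t)) t).

Definition IDes (s : seq nat) : seq nat :=
  [seq i <- iota 1 (size s).-1 | index i.+1 s < index i s].
Definition ides (s : seq nat) : nat := size (IDes s).
Definition imaj (s : seq nat) : nat := sumn (IDes s).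
Definition inversions (s : seq nat) : nat :=
  count (fun p : nat * nat => (p.1 < p.2) && (nth 0 s p.2 < nth 0 s p.1))
        [seq (i, j) | i <- iota 0 (size s), j <- iota 0 (size s)].
Definition RLmin (s : seq nat) : nat :=
  count (fun i => all (fun j => nth 0 s i < nth 0 s j) (iota i.+1 (size s - i.+1)))
        (iota 0 (size s)).

From Pilot Require Import Defs.
From mathcomp Require Import all_boot.
From Stdlib Require Import Lia.
From mathcomp Require Import zify.
Set Implicit Arguments. Unset Strict Implicit. Unset Printing Implicit Defensive.

(* Psi(sigma) is an increasing tree whose right spine v_0 < ... < v_m consists of
   the right-to-left minima of sigma, with v_0 = 1 and, sigma ending with n, v_m = n.
   Omega keeps the shape and the reading order, so tau is sigma relabelled by g with
   g v_0 = 1, g v_i = v_(i-1) + 1 and g x = x + 1 off the spine.  The preimage of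
   k + 1 is k or the spine successor of k, and comparing positions shows that k is an
   inverse descent of sigma iff k + 1 is one of tau (1 and n - 1 never are).  A pair
   x before y is reversed by g only when x is off the spine and y is the least spine
   letter above x, so each of the n - RLmin(sigma) letters off the spine adds exactly
   one inversion.  The relabelled tree is still increasing, and it satisfies the
   André II condition "right child < left child" (a left child forces a right one
   since T is in URL_n): at a spine node v with children y, z we get
   g z = v + 1 < y + 1 = g y; at any other node x, some letter q < x follows the
   subtree of x, and y < z would make y x q a double descent of sigma restricted to
   the letters <= y. *)

(** * Least letters and the tree of a word *)

Lemma foldr_minn_le a w y : y \in a :: w -> foldr minn a w <= y.
Proof.
elim: w => [|x w IH]; first by rewrite inE => /eqP->.
rewrite !inE /= geq_min => /or3P[/eqP ya|/eqP->|yw].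
- by rewrite IH ?orbT // ya mem_head.
- by rewrite leqnn.
- by rewrite IH ?orbT // inE yw orbT.
Qed.

Lemma foldr_minn_in a w : foldr minn a w \in a :: w.
Proof.
elim: w => [|x w IH] /=; first by rewrite inE.
rewrite /minn; case: ifP => _; first by rewrite !inE eqxx orbT.
by move: IH; rewrite !inE => /orP[]->; rewrite ?orbT.
Qed.

Lemma wmin_le w y : y \in w -> wmin w <= y.
Proof. by case: w => // x w yw; apply: foldr_minn_le; rewrite inE yw orbT. Qed.

Lemma wmin_in w : w != [::] -> wmin w \in w.
Proof.
case: w => // x w _; change (foldr minn x (x :: w) \in x :: w).
by have := foldr_minn_in x (x :: w); rewrite inE => /predU1P[->|]; rewrite ?mem_head.
Qed.

Lemma wmin_eq w m : m \in w -> {in w, forall y, m <= y} -> wmin w = m.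
Proof.
move=> mw m_min; apply/eqP; rewrite eqn_leq wmin_le // m_min //.
by apply: wmin_in; case: w mw {m_min}.
Qed.

Lemma wmin_cat (a b : seq nat) : a != [::] -> b != [::] ->
  wmin (a ++ b) = minn (wmin a) (wmin b).
Proof.
move=> a0 b0; apply: wmin_eq => [|y]; last first.
  by rewrite mem_cat geq_min => /orP[] /wmin_le ->; rewrite ?orbT.
by rewrite /minn mem_cat; case: ifP => _; rewrite wmin_in ?orbT.
Qed.

Lemma cat_take_index_drop (w : seq nat) m : m \in w ->
  take (index m w) w ++ m :: drop (index m w).+1 w = w.
Proof. by move=> mw; rewrite -{2}(nth_index 0 mw) -drop_nth ?index_mem // cat_take_drop. Qed.

Lemma drop_pivot (a b : seq nat) x : drop (size a).+1 (a ++ x :: b) = b.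
Proof. by rewrite -cat_rcons drop_size_cat ?size_rcons. Qed.

Lemma psi_fS k w : w != [::] -> psi_f k.+1 w =
  LNode (wmin w) (psi_f k (take (index (wmin w) w) w))
                 (psi_f k (drop (index (wmin w) w).+1 w)).
Proof. by case: w. Qed.

Lemma size_take_drop_index (w : seq nat) k m : m \in w -> size w <= k.+1 ->
  size (take (index m w) w) <= k /\ size (drop (index m w).+1 w) <= k.
Proof.
move=> mw; have i_lt : index m w < size w by rewrite index_mem.
rewrite size_take size_drop i_lt; lia.
Qed.

Lemma inorder_psi_f k w : size w <= k -> inorder (psi_f k w) = w.
Proof.
elim: k w => [|k IH] w w_k; first by case: w w_k.
have [->//|w0] := eqVneq w [::]; have mw := wmin_in w0.
have [take_k drop_k] := size_take_drop_index mw w_k.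
by rewrite psi_fS //= !IH // cat_take_index_drop.
Qed.

Lemma inorder_node_neq0 x l r : inorder (LNode x l r) != [::].
Proof. by rewrite /=; case: (inorder l). Qed.

Lemma root_in_inorder x l r : x \in inorder (LNode x l r).
Proof. by rewrite /= mem_cat mem_head orbT. Qed.

Fixpoint heap (t : ltree) : bool :=
  if t is LNode x l r then
    [&& all (fun y => x < y) (inorder l ++ inorder r), heap l & heap r]
  else true.

Lemma heap_psi_f k w : uniq w -> size w <= k -> heap (psi_f k w).
Proof.
elim: k w => [|k IH] w w_uniq w_k; first by case: w w_uniq w_k.
have [w_nil|w0] := eqVneq w [::]; first by rewrite w_nil.
have mw := wmin_in w0.
have [take_k drop_k] := size_take_drop_index mw w_k.
rewrite psi_fS //= !inorder_psi_f // !IH ?take_uniq ?drop_uniq // !andbT -remE.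
apply/allP => y; rewrite mem_rem_uniq // inE => /andP[ym yw].
by rewrite ltn_neqAle eq_sym ym wmin_le.
Qed.

Lemma heap_root_notin x l r : heap (LNode x l r) -> x \notin inorder l.
Proof.
case/and3P=> /allP x_min _ _; apply/negP => xl.
by have := x_min x; rewrite mem_cat xl ltnn => /(_ isT).
Qed.

Lemma wmin_heap x l r : heap (LNode x l r) -> wmin (inorder (LNode x l r)) = x.
Proof.
case/and3P=> /allP x_min _ _; apply: wmin_eq => [|y]; first exact: root_in_inorder.
rewrite mem_cat inE orbCA => /predU1P[->//|yl]; by apply/ltnW/x_min; rewrite mem_cat.
Qed.

Lemma psi_f_inorder k t : heap t -> size (inorder t) <= k -> psi_f k (inorder t) = t.
Proof.
elim: t k => [|x l IHl r IHr] k t_heap; first by case: k.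
rewrite [inorder _]/= size_cat /= addnS; case: k => // k; rewrite ltnS => lr_k.
have xl := heap_root_notin t_heap; have /and3P[_ l_heap r_heap] := t_heap.
rewrite psi_fS ?(inorder_node_neq0 x l r) // (wmin_heap t_heap) index_pivot //.
by rewrite take_size_cat // drop_pivot IHl ?IHr //; lia.
Qed.

Lemma inorder_Psi w : inorder (Psi w) = w.
Proof. exact: inorder_psi_f. Qed.

Lemma heap_Psi w : uniq w -> heap (Psi w).
Proof. by move=> w_uniq; apply: heap_psi_f. Qed.

Lemma Psi_inorder t : heap t -> Psi (inorder t) = t.
Proof. by move=> t_heap; apply: psi_f_inorder. Qed.

(** * André II words as trees *)

Definition andre_node (l r : ltree) : bool :=
  match l, r with
  | LLeaf, _ => true
  | LNode y _ _, LNode z _ _ => z < y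
  | _, _ => false
  end.

Fixpoint andre_tree (t : ltree) : bool :=
  if t is LNode _ l r then [&& andre_tree l, andre_tree r & andre_node l r] else true.

Lemma wmin_in_right l r : heap l -> heap r -> uniq (inorder l ++ inorder r) ->
  inorder l ++ inorder r != [::] ->
  (wmin (inorder l ++ inorder r) \in inorder r) = andre_node l r.
Proof.
case: l => [|y l1 l2]; case: r => [|z r1 r2] // l_heap r_heap lr_uniq lr0.
  by rewrite wmin_in.
have yr : y \notin inorder (LNode z r1 r2).
  move: lr_uniq; rewrite cat_uniq => /and3P[_ /hasPn/(_ y)/contraTN yr _].
  exact/yr/root_in_inorder.
rewrite wmin_cat ?inorder_node_neq0 // (wmin_heap l_heap) (wmin_heap r_heap) /minn.
case: ltnP => [y_z|z_y]; first by rewrite (negbTE yr) /= ltnNge ltnW.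
rewrite root_in_inorder /= ltn_neqAle z_y andbT; apply/esym.
by apply: contraNneq yr => ->; exact: root_in_inorder.
Qed.

Lemma andre_fS k w : andre_f k.+1 w = (size w <= 1) ||
  [&& andre_f k (take (index (wmin w) w) w), andre_f k (drop (index (wmin w) w).+1 w)
    & wmin (take (index (wmin w) w) w ++ drop (index (wmin w) w).+1 w)
        \in drop (index (wmin w) w).+1 w].
Proof. by []. Qed.

Lemma inorder_nil t : inorder t = [::] -> t = LLeaf.
Proof. by case: t => // x l r /eqP; rewrite (negbTE (inorder_node_neq0 x l r)). Qed.

Lemma andre_f_inorder k t : heap t -> uniq (inorder t) -> size (inorder t) <= k ->
  andre_f k (inorder t) = andre_tree t.
Proof.
elim: t k => [|x l IHl r IHr] k t_heap; first by case: k.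
have /and3P[_ l_heap r_heap] := t_heap; have xl := heap_root_notin t_heap.
move=> t_uniq; have lr_uniq : uniq (inorder l ++ inorder r).
  by move: t_uniq; rewrite /= -cat1s uniq_catCA cat1s cons_uniq => /andP[].
move: t_uniq; rewrite [inorder _]/= cat_uniq size_cat /= addnS => /and3P[l_uniq _ /andP[_ r_uniq]].
case: k => // k; rewrite ltnS => lr_k.
rewrite andre_fS (wmin_heap t_heap) index_pivot // take_size_cat // drop_pivot.
rewrite IHl ?IHr //; try lia.
have [/nilP|lr0] := eqVneq (inorder l ++ inorder r) [::].
  by rewrite cat_nilp => /andP[/nilP/inorder_nil-> /nilP/inorder_nil->].
by rewrite wmin_in_right //= size_cat /= addnS ltnS leqn0 -size_cat size_eq0 (negbTE lr0).
Qed.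

Lemma andreII_inorder t : heap t -> uniq (inorder t) -> andreII (inorder t) = andre_tree t.
Proof. by move=> t_heap t_uniq; apply: andre_f_inorder. Qed.

(** * The right spine and right-to-left minima *)

Lemma rspine_sub t : {subset rspine t <= inorder t}.
Proof.
elim: t => //= x l _ r IH y; rewrite inE mem_cat inE => /predU1P[->|/IH->];
  by rewrite ?eqxx !orbT.
Qed.

Lemma sorted_rspine t : heap t -> sorted ltn (rspine t).
Proof.
elim: t => //= x l _ r IH /and3P[/allP x_min _ r_heap].
rewrite (path_sortedE ltn_trans) IH // andbT.
by apply/allP => y /rspine_sub yr; apply: x_min; rewrite mem_cat yr orbT.
Qed.

Lemma last_inorder_rspine t d : last d (inorder t) \in d :: rspine t.
Proof.
elim: t d => [|x l _ r IH] d /=; first exact: mem_head.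
by rewrite last_cat /=; have := IH x; rewrite !inE => /orP[]->; rewrite ?orbT.
Qed.

Lemma index_pivot_left (a b : seq nat) x z : z \in a -> index z (a ++ x :: b) = index z a.
Proof. by move=> za; rewrite index_cat za. Qed.

Lemma index_pivot_left_lt (a b : seq nat) x z : z \in a -> index z (a ++ x :: b) < size a.
Proof. by move=> za; rewrite index_pivot_left // index_mem. Qed.

Lemma mem_pivot_after (a b : seq nat) x z : z \in a ++ x :: b ->
  size a <= index z (a ++ x :: b) -> z \in b \/ z = x.
Proof.
rewrite mem_cat inE => /or3P[za|/eqP->|zb]; [|by right|by left].
by rewrite leqNgt index_pivot_left_lt.
Qed.

Section UniqPivot.
Variables (a b : seq nat) (x : nat).
Hypothesis axb_uniq : uniq (a ++ x :: b).

Lemma index_pivot_mid : index x (a ++ x :: b) = size a.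
Proof.
apply: index_pivot; move: axb_uniq.
by rewrite -cat1s uniq_catCA cat1s cons_uniq mem_cat negb_or => /andP[/andP[]].
Qed.

Lemma index_pivot_right z : z \in b -> index z (a ++ x :: b) = size a + (index z b).+1.
Proof.
move=> zb; move: axb_uniq; rewrite cat_uniq => /and3P[_ /hasPn ab_disj /andP[xb _]].
have za : z \notin a by apply: ab_disj; rewrite inE zb orbT.
rewrite index_cat (negbTE za) /=; case: eqP xb => // ->.
by rewrite zb.
Qed.

End UniqPivot.

Lemma inorder_node_uniq_right x l r : uniq (inorder (LNode x l r)) -> uniq (inorder r).
Proof. by rewrite /= cat_uniq /= => /and3P[_ _ /andP[]]. Qed.

Lemma rspine_lt_later t v y : heap t -> uniq (inorder t) -> v \in rspine t ->
  y \in inorder t -> index v (inorder t) < index y (inorder t) -> v < y.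
Proof.
elim: t v y => //= x l _ r IH v y /and3P[/allP x_min _ r_heap] t_uniq.
have r_uniq := inorder_node_uniq_right t_uniq.
rewrite inE => /predU1P[->|vr] yt v_y.
  rewrite (index_pivot_mid t_uniq) in v_y.
  case: (mem_pivot_after yt (ltnW v_y)) => [yr|y_x]; last first.
    by move: v_y; rewrite y_x (index_pivot_mid t_uniq) ltnn.
  by apply: x_min; rewrite mem_cat yr orbT.
rewrite (index_pivot_right t_uniq (rspine_sub vr)) in v_y.
case: (mem_pivot_after yt (leq_trans (leq_addr _ _) (ltnW v_y))) => [yr|y_x].
  by apply: IH => //; move: v_y; rewrite (index_pivot_right t_uniq yr); lia.
by move: v_y; rewrite y_x (index_pivot_mid t_uniq); lia.
Qed.

Lemma rspine_next_le_later t j y : heap t -> uniq (inorder t) -> j.+1 < size (rspine t) ->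
  y \in inorder t -> index (nth 0 (rspine t) j) (inorder t) < index y (inorder t) ->
  nth 0 (rspine t) j.+1 <= y.
Proof.
elim: t j y => //= x l _ r IH j y /and3P[/allP x_min _ r_heap] t_uniq.
have r_uniq := inorder_node_uniq_right t_uniq.
case: j => [|j] /= j_lt yt v_y.
  rewrite (index_pivot_mid t_uniq) in v_y.
  case: (mem_pivot_after yt (ltnW v_y)) => [yr|y_x]; last first.
    by move: v_y; rewrite y_x (index_pivot_mid t_uniq) ltnn.
  case: r r_heap j_lt yr {IH r_uniq x_min t_uniq yt v_y} => [//|z r1 r2] /and3P[/allP z_min _ _] _.
  rewrite /= mem_cat inE orbCA => /predU1P[->//|yr]; apply/ltnW/z_min.
  by rewrite mem_cat.
have vr : nth 0 (rspine r) j \in inorder r.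
  by apply/rspine_sub/mem_nth; rewrite ltnS in j_lt; exact: ltnW.
rewrite (index_pivot_right t_uniq vr) in v_y.
case: (mem_pivot_after yt (leq_trans (leq_addr _ _) (ltnW v_y))) => [yr|y_x].
  by apply: IH => //; move: v_y; rewrite (index_pivot_right t_uniq yr); lia.
by move: v_y; rewrite y_x (index_pivot_mid t_uniq); lia.
Qed.

Lemma off_rspine_smaller_later t y : heap t -> uniq (inorder t) -> y \in inorder t ->
  y \notin rspine t ->
  exists2 v, v \in rspine t & index y (inorder t) < index v (inorder t) /\ v < y.
Proof.
elim: t y => //= x l _ r IH y /and3P[/allP x_min _ r_heap] t_uniq.
have r_uniq := inorder_node_uniq_right t_uniq.
rewrite inE negb_or mem_cat inE => /or3P[yl|/eqP->|yr] /andP[y_x y_r]; last 2 first.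
- by rewrite eqxx in y_x.
- have [v vr [v_y vy]] := IH y r_heap r_uniq yr y_r.
  exists v; first by rewrite inE vr orbT.
  by rewrite (index_pivot_right t_uniq yr) (index_pivot_right t_uniq (rspine_sub vr)); lia.
exists x; first exact: mem_head.
by rewrite (index_pivot_mid t_uniq) index_pivot_left_lt // x_min // mem_cat yl.
Qed.

(** * Double descents *)

Lemma has_dd_inner (a b : seq nat) x y z : y < x -> z < y -> has_dd (a ++ [:: x, y, z & b]).
Proof.
move=> y_x z_y; apply/hasP; exists (size a); first by rewrite mem_iota size_cat /=; lia.
have nth_after k : nth 0 (a ++ [:: x, y, z & b]) (size a + k) = nth 0 [:: x, y, z & b] k.
  by rewrite nth_cat ltnNge leq_addr addKn.
move: (nth_after 0) (nth_after 1) (nth_after 2); rewrite addn0 addn1 addn2 /= => -> -> ->.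
by rewrite y_x z_y.
Qed.

Definition dd_free_restrictions (s : seq nat) : Prop :=
  forall k, k \in s -> ~~ has_dd [seq x <- s | x <= k].

Lemma filter_leq_nil (s : seq nat) y : all (fun u => y < u) s -> [seq u <- s | u <= y] = [::].
Proof.
move=> /allP s_gt; rewrite -(filter_pred0 s); apply: eq_in_filter => u /s_gt.
by rewrite /= ltnNge => /negbTE.
Qed.

Lemma all_ltn_trans (s : seq nat) a b : a <= b -> all (fun u => b < u) s -> all (fun u => a < u) s.
Proof. by move=> a_b; apply: sub_all => u /(leq_ltn_trans a_b). Qed.

Lemma dd_free_node s P x y l1 l2 z r1 r2 q Q :
  uniq s -> dd_free_restrictions s ->
  s = P ++ inorder (LNode x (LNode y l1 l2) (LNode z r1 r2)) ++ q :: Q ->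
  heap (LNode x (LNode y l1 l2) (LNode z r1 r2)) -> q < x -> z < y.
Proof.
move=> s_uniq s_dd s_eq /and3P[/allP x_min /and3P[y_min _ _] /and3P[z_min _ _]] q_x.
have x_y : x < y by apply: x_min; rewrite mem_cat root_in_inorder.
have [y_z|//|y_eq_z] := ltngtP y z; last first.
  have := count_uniq_mem y s_uniq; have := leq_b1 (y \in s).
  by rewrite s_eq /= !count_cat /= !count_cat /= -y_eq_z eqxx; lia.
move: y_min z_min; rewrite !all_cat => /andP[l1_gt l2_gt] /andP[r1_gt r2_gt].
have ys : y \in s by rewrite s_eq !(mem_cat, inE, eqxx, orbT).
(* Restricted to the letters <= y, s reads ... y x q ... *)
move: (s_dd y ys); rewrite s_eq /= !filter_cat /= !filter_cat /=.
rewrite (filter_leq_nil l1_gt) (filter_leq_nil l2_gt).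
rewrite (filter_leq_nil (all_ltn_trans (ltnW y_z) r1_gt))
  (filter_leq_nil (all_ltn_trans (ltnW y_z) r2_gt)).
rewrite leqnn (ltnW x_y) (ltnW (ltn_trans q_x x_y)) leqNgt y_z /=.
by rewrite has_dd_inner.
Qed.

Lemma url_ok_children a b : url_ok (BNode a b) -> url_ok a && url_ok b.
Proof. by case: a => [|? ?]; case: b. Qed.

Lemma andre_tree_before_smaller s t P q Q :
  uniq s -> dd_free_restrictions s -> s = P ++ inorder t ++ q :: Q ->
  heap t -> url_ok (Defs.shape t) -> all (fun y => q < y) (inorder t) -> andre_tree t.
Proof.
move=> s_uniq s_dd; elim: t P q Q => //= x l IHl r IHr P q Q s_eq t_heap t_url /allP q_min.
have /and3P[/allP x_min l_heap r_heap] := t_heap.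
have /andP[l_url r_url] := url_ok_children t_url.
rewrite (IHl P x (inorder r ++ q :: Q)) ?(IHr (P ++ inorder l ++ [:: x]) q Q) //=.
- have q_x : q < x by apply: q_min; rewrite mem_cat mem_head orbT.
  case: l r {IHl IHr l_heap r_heap x_min l_url r_url q_min} t_heap t_url s_eq
    => [|y l1 l2] [|z r1 r2] // t_heap _ s_eq.
  exact: dd_free_node s_uniq s_dd s_eq t_heap q_x.
- by rewrite s_eq -!catA.
- by apply/allP => y yr; apply: q_min; rewrite mem_cat inE yr !orbT.
- by rewrite s_eq -!catA.
- by apply/allP => y yl; apply: x_min; rewrite mem_cat yl.
Qed.

(** * The relabelling of Omega *)

Lemma inorder_lmap f t : inorder (lmap f t) = map f (inorder t).
Proof. by elim: t => //= x l -> r ->; rewrite map_cat. Qed.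

Lemma shape_lmap f t : Defs.shape (lmap f t) = Defs.shape t.
Proof. by elim: t => //= x l -> r ->. Qed.

Lemma heap_lmap f t : {in inorder t &, {mono f : x y / x < y}} -> heap t -> heap (lmap f t).
Proof.
elim: t => //= x l IHl r IHr f_mono /and3P[/allP x_min l_heap r_heap].
have xt : x \in inorder l ++ x :: inorder r by rewrite mem_cat mem_head orbT.
rewrite IHl ?IHr // ?andbT; first 1 last.
- by move=> a b ar br; apply: f_mono; rewrite mem_cat inE ?ar ?br !orbT.
- by move=> a b al bl; apply: f_mono; rewrite mem_cat ?al ?bl.
rewrite !inorder_lmap -map_cat all_map; apply/allP => y yt /=.
by rewrite f_mono ?x_min // mem_cat inE orbCA; move: yt; rewrite mem_cat => ->; rewrite orbT.
Qed.

Lemma andre_tree_lmap f t : {in inorder t &, {mono f : x y / x < y}} ->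
  andre_tree (lmap f t) = andre_tree t.
Proof.
elim: t => //= x l IHl r IHr f_mono; rewrite IHl ?IHr; first 1 last.
- by move=> a b ar br; apply: f_mono; rewrite mem_cat inE ?ar ?br !orbT.
- by move=> a b al bl; apply: f_mono; rewrite mem_cat ?al ?bl.
congr [&& _, _ & _]; case: l {IHl} f_mono => [|y l1 l2]; case: r {IHr} => [|z r1 r2] //= f_mono.
by apply: f_mono; rewrite !(mem_cat, inE, eqxx, orbT).
Qed.

Lemma head_rspine t : heap t -> nth 0 (rspine t) 0 = wmin (inorder t).
Proof. by case: t => // x l r t_heap; rewrite wmin_heap. Qed.

Lemma omega_lab_notin R x : x \notin R -> omega_lab R x = x.+1.
Proof. by rewrite /omega_lab => /negbTE ->. Qed.

Lemma omega_lab_head R : R != [::] -> omega_lab R (nth 0 R 0) = 1.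
Proof. by case: R => // x R _; rewrite /omega_lab mem_head /= eqxx. Qed.

Lemma omega_lab_nth R j : uniq R -> j.+1 < size R ->
  omega_lab R (nth 0 R j.+1) = (nth 0 R j).+1.
Proof. by move=> R_uniq j_lt; rewrite /omega_lab mem_nth // index_uniq. Qed.

Lemma sumn_mapD (s : seq nat) (f h : nat -> nat) :
  sumn [seq f i + h i | i <- s] = sumn (map f s) + sumn (map h s).
Proof. by elim: s => //= a s ->; rewrite addnACA. Qed.

Lemma count_nth_iota (s : seq nat) (P : pred nat) :
  count (fun i => P (nth 0 s i)) (iota 0 (size s)) = count P s.
Proof. by rewrite -[in RHS](mkseq_nth 0 s) /mkseq count_map. Qed.

Lemma count_nth_eq (s : seq nat) (P : pred nat) y : uniq s -> y \in s ->
  count (fun j => P j && (nth 0 s j == y)) (iota 0 (size s)) = P (index y s).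
Proof.
move=> s_uniq ys; have y_lt : index y s < size s by rewrite index_mem.
rewrite (@eq_in_count _ _ (fun j => (j == index y s) && P (index y s))); last first.
  move=> j; rewrite mem_iota add0n => /andP[_ j_lt].
  by rewrite -{1}(nth_index 0 ys) nth_uniq // andbC; case: eqP => // ->.
case: (P _); last by rewrite (eq_count (a2 := pred0)) ?count_pred0 // => j; rewrite andbF.
rewrite (eq_count (a2 := pred1 (index y s))) => [|j]; last by rewrite andbT.
by rewrite count_uniq_mem ?iota_uniq // mem_iota y_lt.
Qed.

Lemma inversionsE s : inversions s =
  sumn [seq count (fun j => (i < j) && (nth 0 s j < nth 0 s i)) (iota 0 (size s))
       | i <- iota 0 (size s)].
Proof.
rewrite /inversions count_flatten -map_comp; congr sumn.
by apply: eq_map => i /=; rewrite count_map.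
Qed.

Section Omega.
Variables (n : nat) (t : ltree).
Hypotheses (t_heap : heap t) (t_perm : perm_eq (inorder t) (iota 1 n))
  (n_spine : n \in rspine t).

Local Notation sigma := (inorder t).
Local Notation R := (rspine t).
Local Notation g := (omega_lab R).

Let sigma_uniq : uniq sigma.
Proof. by rewrite (perm_uniq t_perm) iota_uniq. Qed.

Let mem_sigma x : (x \in sigma) = (0 < x <= n).
Proof. by rewrite (perm_mem t_perm) mem_iota add1n ltnS. Qed.

Let size_sigma : size sigma = n.
Proof. by rewrite (perm_size t_perm) size_iota. Qed.

Let spine_sub : {subset R <= sigma}.
Proof. exact: rspine_sub. Qed.

Let spine_uniq : uniq R.
Proof. exact/(sorted_uniq ltn_trans ltnn)/sorted_rspine. Qed.

Let mem_spine x : x \in R -> 0 < x <= n.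
Proof. by move/spine_sub; rewrite mem_sigma. Qed.

Let spine_head : nth 0 R 0 = 1.
Proof.
rewrite head_rspine //; apply: wmin_eq => [|y]; last by rewrite mem_sigma => /andP[].
by rewrite mem_sigma leqnn; case/andP: (mem_spine n_spine).
Qed.

Let spine_lt_later v y : v \in R -> y \in sigma -> index v sigma < index y sigma -> v < y.
Proof. exact: rspine_lt_later. Qed.

Lemma spine_mono i j : i < size R -> j < size R -> (nth 0 R i < nth 0 R j) = (i < j).
Proof.
have R_sorted := sorted_rspine t_heap.
move=> i_lt j_lt; case: (ltnP i j) => i_j; first exact: (sorted_ltn_nth ltn_trans).
apply/negbTE; rewrite -leqNgt; apply: (sorted_leq_nth leq_trans leqnn) => //.
by apply: sub_sorted R_sorted => a b /ltnW.
Qed.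

Lemma spine_cases x : x \in R -> (x = 1 /\ g x = 1) \/
  exists2 j, j.+1 < size R & x = nth 0 R j.+1 /\ g x = (nth 0 R j).+1.
Proof.
move=> xR; have j_lt : index x R < size R by rewrite index_mem.
rewrite -(nth_index 0 xR); case: (index x R) j_lt => [|j] j_lt; [left|right].
  by rewrite omega_lab_head ?spine_head //; case: R xR {j_lt}.
by exists j; rewrite ?omega_lab_nth.
Qed.

Lemma omega_lab_spine_le v : v \in R -> g v <= v.
Proof.
by case/spine_cases => [[-> ->]|[j j_lt [-> ->]]] //; rewrite spine_mono // ltnW.
Qed.

Lemma spine_pos j : j < size R -> 0 < nth 0 R j.
Proof. by move=> j_lt; case/andP: (mem_spine (mem_nth 0 j_lt)). Qed.

Lemma omega_lab_spine_mono v w : v \in R -> w \in R -> (g v < g w) = (v < w).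
Proof.
case/spine_cases => [[-> ->]|[j j_lt [-> ->]]];
  case/spine_cases => [[-> ->]|[k k_lt [-> ->]]] //.
- rewrite ltnS spine_pos ?(ltnW k_lt) // -{1}spine_head spine_mono //.
  exact: leq_ltn_trans (leq0n _) k_lt.
- by have := spine_pos j_lt; have := spine_pos (ltnW j_lt); lia.
- by rewrite ltnS !spine_mono // ltnW.
Qed.

Definition spine_next v := nth 0 R (index v R).+1.

Lemma spine_nextP v : v \in R -> v < n ->
  [/\ (index v R).+1 < size R, spine_next v \in R, v < spine_next v,
      g (spine_next v) = v.+1 & {in R, forall u, v < u -> spine_next v <= u}].
Proof.
move=> vR v_n; have v_lt : index v R < size R by rewrite index_mem.
have n_lt : index n R < size R by rewrite index_mem.
have v_before_n : index v R < index n R by rewrite -spine_mono // !nth_index.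
have next_lt : (index v R).+1 < size R by exact: leq_ltn_trans n_lt.
split => //; first exact: mem_nth.
- by rewrite /spine_next -{1}(nth_index 0 vR) spine_mono.
- by rewrite /spine_next omega_lab_nth // nth_index.
move=> u uR v_u; have u_lt : index u R < size R by rewrite index_mem.
have iv_iu : index v R < index u R.
  by move: v_u; rewrite -{1}(nth_index 0 vR) -{1}(nth_index 0 uR) spine_mono.
rewrite -(nth_index 0 uR) /spine_next; move: iv_iu; rewrite leq_eqVlt => /predU1P[->//|next_u].
by rewrite ltnW // spine_mono.
Qed.

Let one_spine : 1 \in R.
Proof. by rewrite -spine_head mem_nth //; case: R n_spine. Qed.

Let omega_lab_one : g 1 = 1.
Proof. by rewrite -{1}spine_head omega_lab_head //; case: R n_spine. Qed.

Let off_spine_lt_n x : x \in sigma -> x \notin R -> x < n.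
Proof.
rewrite mem_sigma => /andP[_ x_n] xR; rewrite ltn_neqAle x_n andbT.
by apply: contraNneq xR => ->.
Qed.

Definition omega_pre k := if k \in R then spine_next k else k.

Lemma omega_preP k : 0 < k < n -> omega_pre k \in sigma /\ g (omega_pre k) = k.+1.
Proof.
case/andP=> k_gt0 k_n; rewrite /omega_pre; case: ifP => kR.
  by have [_ next_R _ -> _] := spine_nextP kR k_n; rewrite spine_sub.
by rewrite omega_lab_notin ?kR // mem_sigma k_gt0 ltnW.
Qed.

Lemma perm_relabel : perm_eq (map g sigma) (iota 1 n).
Proof.
have iota_sub : {subset iota 1 n <= map g sigma}.
  move=> k; rewrite mem_iota add1n ltnS => /andP[]; case: k => // -[_ _|k _ k_n].
    by rewrite -[X in X \in _]omega_lab_one map_f // spine_sub.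
  by have [ks <-] := omega_preP (k := k.+1) k_n; rewrite map_f.
have size_eq : size (map g sigma) = size (iota 1 n) by rewrite size_map size_sigma size_iota.
have [_ eq_mem] := uniq_min_size (iota_uniq 1 n) iota_sub (eq_leq size_eq).
rewrite perm_sym; apply: (uniq_perm _ _ eq_mem); first exact: iota_uniq.
by rewrite (uniq_size_uniq (iota_uniq 1 n) eq_mem) size_eq.
Qed.

Let relabel_uniq : uniq (map g sigma).
Proof. by rewrite (perm_uniq perm_relabel) iota_uniq. Qed.

Lemma index_relabel x : x \in sigma -> index (g x) (map g sigma) = index x sigma.
Proof.
move=> xs; rewrite -{1}(nth_index 0 xs) -(nth_map 0 0) ?index_mem //.
by rewrite index_uniq // size_map index_mem.
Qed.


Lemma spine_next_le_later v y : v \in R -> v < n -> y \in sigma ->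
  index v sigma < index y sigma -> spine_next v <= y.
Proof.
move=> vR v_n ys v_y; have [next_lt _ _ _ _] := spine_nextP vR v_n.
by apply: rspine_next_le_later; rewrite ?nth_index.
Qed.

Let index_ltNgt x y : x \in sigma -> y \in sigma -> x != y ->
  (index x sigma < index y sigma) = ~~ (index y sigma < index x sigma).
Proof.
move=> xs ys x_y; case: ltngtP => // same_index; case/eqP: x_y.
by rewrite -(nth_index 0 xs) same_index nth_index.
Qed.

Let spine_not_before v y : v \in R -> y \in sigma -> y <= v ->
  (index v sigma < index y sigma) = false.
Proof. by move=> vR ys y_v; apply/negbTE/negP => /(spine_lt_later vR ys); rewrite ltnNge y_v. Qed.

Lemma omega_pre_descent k : 0 < k -> k.+1 < n ->
  (index (omega_pre k.+1) sigma < index (omega_pre k) sigma) =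
  (index k.+1 sigma < index k sigma).
Proof.
move=> k_gt0 k1_n; have k_n : k < n by exact: ltn_trans k1_n.
have ks : k \in sigma by rewrite mem_sigma k_gt0 ltnW.
have k1s : k.+1 \in sigma by rewrite mem_sigma ltnW.
rewrite /omega_pre; case: (boolP (k \in R)) => kR; case: (boolP (k.+1 \in R)) => k1R //.
- have [_ _ k_next _ next_min] := spine_nextP kR k_n.
  have [_ next1_R k1_next1 _ _] := spine_nextP k1R k1_n.
  have -> : spine_next k = k.+1 by apply/eqP; rewrite eqn_leq k_next next_min.
  by rewrite !spine_not_before // ltnW.
- have [_ next_R k_next _ _] := spine_nextP kR k_n.
  have next_k1 : spine_next k != k.+1 by apply: contraNneq k1R => <-.
  have k1_next : k.+1 < spine_next k by rewrite ltn_neqAle eq_sym next_k1.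
  rewrite (index_ltNgt k1s (spine_sub next_R)) ?(ltn_eqF k1_next) //.
  rewrite (index_ltNgt k1s ks) ?gtn_eqF // spine_not_before ?(ltnW k1_next) //=.
  by apply/esym/negP => /(spine_next_le_later kR k_n k1s); rewrite leqNgt k1_next.
- have [_ next1_R k1_next1 _ _] := spine_nextP k1R k1_n.
  by rewrite !spine_not_before // ltnW // ltnW.
Qed.

Let index_relabel_succ k : 0 < k < n -> index k.+1 (map g sigma) = index (omega_pre k) sigma.
Proof. by move=> k_bounds; have [pre_s <-] := omega_preP k_bounds; rewrite index_relabel. Qed.

Lemma IDes_relabel : IDes (map g sigma) = [seq i.+1 | i <- IDes sigma].
Proof.
have one_s : 1 \in sigma by exact: spine_sub.
rewrite /IDes size_map size_sigma; case/andP: (mem_spine n_spine).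
case En: n => [|[|m]] // _ _.
have one_n : 1 < n by rewrite En.
have [_ next_R one_next _ _] := spine_nextP one_spine one_n.
have -> : m.+2.-1 = m + 1 by rewrite addn1.
rewrite {1}(_ : iota 1 (m + 1) = 1 :: [seq i.+1 | i <- iota 1 m]); last first.
  by rewrite addn1 /= (iotaDl 1 1).
rewrite iotaD filter_cat /= -{2}omega_lab_one index_relabel // index_relabel_succ ?En //.
rewrite /omega_pre one_spine spine_not_before ?(ltnW one_next) //.
have last_not_descent : (index n sigma < index m.+1 sigma) = false.
  by apply: spine_not_before => //; rewrite ?mem_sigma En /= leqnSn.
rewrite add1n -En last_not_descent cats0 filter_map; congr map.
apply: eq_in_filter => k; rewrite mem_iota => /andP[k_gt0 k_m].
by rewrite /= !index_relabel_succ ?omega_pre_descent ?k_gt0 ?En //=; lia.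
Qed.

Definition spine_above x := nth 0 R (find (fun v => x < v) R).

Lemma spine_aboveP x : x < n -> spine_above x \in R /\ x < spine_above x.
Proof.
move=> x_n; have has_above : has (fun v => x < v) R by apply/hasP; exists n.
by split; [rewrite mem_nth // -has_find | exact: nth_find].
Qed.

Lemma spine_above_eq x j : x \notin R -> j.+1 < size R -> x < nth 0 R j.+1 ->
  (nth 0 R j < x) = (nth 0 R j.+1 == spine_above x).
Proof.
move=> xR j_lt x_next.
have has_above : has (fun v => x < v) R by apply/hasP; exists (nth 0 R j.+1); rewrite ?mem_nth.
set f := find (fun v => x < v) R; have f_lt : f < size R by rewrite -has_find.
have x_f : x < nth 0 R f := nth_find 0 has_above.
have f_le : f <= j.+1 by rewrite leqNgt; apply/negP => /(before_find 0) /=; rewrite x_next.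
rewrite /spine_above -/f nth_uniq //; apply/idP/eqP => [v_x|f_eq].
  apply/eqP; rewrite eqn_leq f_le andbT ltnNge; apply/negP => f_j.
  have : nth 0 R f <= nth 0 R j.
    by rewrite leqNgt spine_mono ?(ltnW j_lt) // -leqNgt.
  by rewrite leqNgt (ltn_trans v_x x_f).
have j_f : j < f by rewrite -f_eq.
have /negbT := before_find 0 j_f; rewrite /= -leqNgt leq_eqVlt => /predU1P[x_eq|//].
by move: xR; rewrite -x_eq mem_nth // ltnW.
Qed.

Lemma relabel_inversion x y : x \in sigma -> y \in sigma -> index x sigma < index y sigma ->
  (g y < g x) = (y < x) || (x \notin R) && (y == spine_above x).
Proof.
move=> xs ys x_y; have [xR|xR] := boolP (x \in R); have [yR|yR] := boolP (y \in R) => /=.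
- by rewrite omega_lab_spine_mono // orbF.
- have x_lt_y := spine_lt_later xR ys x_y.
  rewrite (omega_lab_notin yR) orbF [y < x]ltnNge (ltnW x_lt_y) ltnNge.
  by rewrite (leq_trans (omega_lab_spine_le xR)) // leqW // ltnW.
- have x_n := off_spine_lt_n xs xR.
  have [y_x|x_y'|y_eq] := ltngtP y x; last by move: xR; rewrite -y_eq yR.
    by rewrite (omega_lab_notin xR) ltnS (leq_trans (omega_lab_spine_le yR)) // ltnW.
  case/spine_cases: yR => [[y1 _]|[j j_lt [y_eq ->]]].
    by move: x_y' xs; rewrite y1 ltnS leqn0 => /eqP->; rewrite mem_sigma.
  by rewrite (omega_lab_notin xR) ltnS y_eq -spine_above_eq // -y_eq.
- rewrite !omega_lab_notin // ltnS; case: eqP => [y_above|_]; last by rewrite orbF.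
  by have [above_R _] := spine_aboveP (off_spine_lt_n xs xR); move: yR; rewrite y_above above_R.
Qed.

Lemma count_spine : count (mem R) sigma = size R.
Proof.
rewrite -size_filter; apply/perm_size/uniq_perm; rewrite ?filter_uniq // => x.
by rewrite mem_filter; apply/andP/idP => [[]//|xR]; rewrite spine_sub.
Qed.

Lemma count_relabel_inversions i : i < n ->
  count (fun j => (i < j) && (g (nth 0 sigma j) < g (nth 0 sigma i))) (iota 0 n) =
  count (fun j => (i < j) && (nth 0 sigma j < nth 0 sigma i)) (iota 0 n) +
  (nth 0 sigma i \notin R).
Proof.
move=> i_n; set x := nth 0 sigma i.
have xs : x \in sigma by rewrite mem_nth ?size_sigma.
have x_idx : index x sigma = i by rewrite index_uniq ?size_sigma.
pose a j := (i < j) && (nth 0 sigma j < x).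
pose b j := (i < j) && (x \notin R) && (nth 0 sigma j == spine_above x).
rewrite (@eq_in_count _ _ (predU a b)); last first.
  move=> j; rewrite mem_iota add0n => /andP[_ j_lt]; rewrite /a /b /=.
  case: ltnP => i_j //=; rewrite relabel_inversion ?mem_nth ?size_sigma //.
  by rewrite x_idx index_uniq ?size_sigma.
have ab_disj : count (predI a b) (iota 0 n) = 0.
  apply/eqP; rewrite -leqn0 leqNgt -has_count; apply/hasPn => j _ /=.
  apply/negP => /andP[/andP[_ sj_x] /andP[/andP[_ xR] /eqP sj_above]].
  have [_] := spine_aboveP (off_spine_lt_n xs xR); rewrite -sj_above ltnNge.
  by rewrite ltnW.
have := count_predUI a b (iota 0 n); rewrite ab_disj addn0 => ->; congr addn.
have [xR|xR] := boolP (x \in R).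
  by rewrite (eq_count (a2 := pred0)) ?count_pred0 // => j; rewrite /b /= xR andbF.
have [above_R x_above] := spine_aboveP (off_spine_lt_n xs xR).
rewrite (eq_count (a2 := fun j => (i < j) && (nth 0 sigma j == spine_above x))); last first.
  by move=> j; rewrite /b xR andbT.
rewrite -size_sigma count_nth_eq ?spine_sub // -x_idx (index_ltNgt xs (spine_sub above_R)).
  by rewrite spine_not_before // ltnW.
by apply: contraNneq xR => ->.
Qed.

Lemma inversions_relabel : inversions (map g sigma) = inversions sigma + (n - size R).
Proof.
rewrite !inversionsE size_map size_sigma.
set inv_at := fun i => count (fun j => (i < j) && (nth 0 sigma j < nth 0 sigma i)) (iota 0 n).
have -> : [seq count (fun j => (i < j) && (nth 0 (map g sigma) j < nth 0 (map g sigma) i))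
             (iota 0 n) | i <- iota 0 n] =
          [seq inv_at i + (nth 0 sigma i \notin R) | i <- iota 0 n].
  apply/eq_in_map => i; rewrite mem_iota add0n => /andP[_ i_n].
  rewrite -count_relabel_inversions //; apply: eq_in_count => j.
  by rewrite mem_iota => /andP[_ j_n]; rewrite !(nth_map 0) ?size_sigma.
rewrite sumn_mapD sumn_count; congr addn.
rewrite -size_sigma (count_nth_iota sigma (predC (mem R))).
by rewrite -(count_predC (mem R) sigma) count_spine addKn.
Qed.

Lemma RLmin_rspine : RLmin sigma = size R.
Proof.
rewrite /RLmin -count_spine -(count_nth_iota sigma (mem R)); apply: eq_in_count => i.
rewrite mem_iota add0n size_sigma => /andP[_ i_n] /=; set x := nth 0 sigma i.
have xs : x \in sigma by rewrite mem_nth ?size_sigma.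
have x_idx : index x sigma = i by rewrite index_uniq ?size_sigma.
have [xR|xR] := boolP (x \in R).
  apply/allP => j; rewrite mem_iota subnKC // => /andP[i_j j_n].
  by apply: spine_lt_later; rewrite ?mem_nth ?size_sigma // x_idx index_uniq ?size_sigma.
have [v vR [x_v v_x]] := off_rspine_smaller_later t_heap sigma_uniq xs xR.
apply/negP => /allP/(_ (index v sigma)); rewrite nth_index ?spine_sub // ltnNge ltnW //.
rewrite x_idx in x_v.
by rewrite mem_iota subnKC // x_v -size_sigma index_mem (spine_sub vR) => /(_ isT).
Qed.

Lemma omega_lab_spine_lt v w : v \in R -> w \in sigma -> v < w -> g v < g w.
Proof.
move=> vR ws v_w; have [wR|wR] := boolP (w \in R); first by rewrite omega_lab_spine_mono.
by rewrite (omega_lab_notin wR) ltnS (leq_trans (omega_lab_spine_le vR)) // ltnW.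
Qed.

Lemma omega_lab_spine_succ S v z S' : R = S ++ [:: v, z & S'] -> g z = v.+1.
Proof.
move=> R_eq; have nthR k : nth 0 R (size S + k) = nth 0 [:: v, z & S'] k.
  by rewrite R_eq nth_cat ltnNge leq_addr addKn.
have := nthR 1; have := nthR 0; rewrite addn0 addn1 /= => <- <-.
by rewrite omega_lab_nth // R_eq size_cat /= !addnS !ltnS leq_addr.
Qed.

Section RelabelTree.
Hypotheses (sigma_dd : dd_free_restrictions sigma) (t_url : url_ok (Defs.shape t)).

Lemma heap_andre_relabel_spine u P S :
  sigma = P ++ inorder u -> R = S ++ rspine u -> heap u -> url_ok (Defs.shape u) ->
  heap (lmap g u) && andre_tree (lmap g u).
Proof.
elim: u P S => [//|v l _ r IHr] P S s_eq R_eq u_heap u_url.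
have /and3P[/allP v_min l_heap r_heap] := u_heap.
have /andP[l_url r_url] := url_ok_children u_url.
have vR : v \in R by rewrite R_eq mem_cat mem_head orbT.
have s_eq' : sigma = (P ++ inorder l) ++ v :: inorder r by rewrite s_eq catA.
have l_off y : y \in inorder l -> y \notin R.
  move=> yl; apply/negP => yR; have := v_min y; rewrite mem_cat yl => /(_ isT).
  rewrite ltnNge ltnW //; apply: spine_lt_later; rewrite ?spine_sub //.
  have ls_uniq := sigma_uniq; rewrite s_eq' in ls_uniq *.
  by rewrite (index_pivot_mid ls_uniq) index_pivot_left_lt // mem_cat yl orbT.
have l_mono : {in inorder l &, {mono g : a b / a < b}}.
  by move=> a b al bl; rewrite !omega_lab_notin ?l_off.
have l_andre : andre_tree l.
  apply: (andre_tree_before_smaller sigma_uniq sigma_dd (P := P) (q := v) (Q := inorder r)) => //.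
  by apply/allP => y yl; apply: v_min; rewrite mem_cat yl.
have /andP[r_heap' r_andre] : heap (lmap g r) && andre_tree (lmap g r).
  apply: (IHr (P ++ inorder l ++ [:: v]) (rcons S v)) => //.
    by rewrite s_eq -!catA.
  by rewrite R_eq cat_rcons.
rewrite /= heap_lmap // andre_tree_lmap // l_andre r_heap' r_andre !andbT /=.
apply/andP; split.
  rewrite !inorder_lmap -map_cat all_map; apply/allP => w wlr /=.
  apply: (omega_lab_spine_lt vR _ (v_min w wlr)).
  by rewrite s_eq' !mem_cat inE; move: wlr; rewrite mem_cat => /orP[]->; rewrite ?orbT.
case El: l => [//|y l1 l2]; case Er: r => [|z r1 r2]; first by rewrite El Er in u_url.
(* z is the spine successor of v, so g z = v.+1 <= y < g y. *)
have yl : y \in inorder l by rewrite El root_in_inorder.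
rewrite /= (omega_lab_notin (l_off y yl)) (@omega_lab_spine_succ S v z (rspine r2)) ?ltnS.
  by apply: v_min; rewrite mem_cat yl.
by rewrite R_eq Er.
Qed.

Lemma heap_andre_relabel : heap (lmap g t) && andre_tree (lmap g t).
Proof. exact: (heap_andre_relabel_spine (P := [::]) (S := [::])). Qed.

End RelabelTree.

Lemma ides_relabel : ides (map g sigma) = ides sigma.
Proof. by rewrite /ides IDes_relabel size_map. Qed.

Lemma imaj_relabel : imaj (map g sigma) = imaj sigma + ides sigma.
Proof.
rewrite /imaj /ides IDes_relabel.
by elim: (IDes sigma) => //= i s ->; rewrite addSn addnS addnA.
Qed.

Lemma inversions_relabel_RLmin :
  inversions (map g sigma) = inversions sigma + n - RLmin sigma.
Proof.
rewrite inversions_relabel RLmin_rspine addnBA // -count_spine -size_sigma.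
exact: count_size.
Qed.

End Omega.

Lemma simsun_dd_free n s : simsun n s -> dd_free_restrictions s.
Proof.
case=> s_perm _ s_dd k; rewrite (perm_mem s_perm) mem_iota add1n ltnS; exact: s_dd.
Qed.

Lemma simsun_last_rspine n t : 1 <= n -> simsun n (inorder t) -> n \in rspine t.
Proof.
move=> n_gt0 [t_perm t_last _]; have := last_inorder_rspine t 0.
rewrite -nth_last (perm_size t_perm) size_iota t_last inE => /predU1P[n0|//].
by rewrite n0 in n_gt0.
Qed.

Unset Implicit Arguments.

Theorem proposition4p5 (n : nat) (T : btree) (sigma : seq nat) :
  1 <= n -> URL n T -> RS n T sigma ->
  let tau := Omega sigma in
  [/\ AndII n T tau,
      ides tau = ides sigma,
      imaj tau = imaj sigma + ides sigma &
      inversions tau = inversions sigma + n - RLmin sigma].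
Proof.
move=> n_gt0 [_ T_url] [s_simsun s_shape]; rewrite /Omega.
have s_uniq : uniq sigma by case: s_simsun => s_perm _ _; rewrite (perm_uniq s_perm) iota_uniq.
have t_heap := heap_Psi s_uniq; have t_sigma := inorder_Psi sigma.
move: (Psi sigma) t_heap t_sigma s_shape => t t_heap <- t_shape in s_simsun s_uniq *.
have t_perm : perm_eq (inorder t) (iota 1 n) by case: s_simsun.
have n_spine := simsun_last_rspine n_gt0 s_simsun.
have /andP[relabel_heap relabel_andre] := heap_andre_relabel t_heap t_perm n_spine
  (simsun_dd_free s_simsun) (etrans (f_equal url_ok t_shape) T_url).
have relabel_perm := perm_relabel t_heap t_perm n_spine.
rewrite inorder_lmap (ides_relabel t_heap t_perm n_spine) (imaj_relabel t_heap t_perm n_spine).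
rewrite (inversions_relabel_RLmin t_heap t_perm n_spine); split=> //; split=> //.
  by rewrite -inorder_lmap andreII_inorder // inorder_lmap (perm_uniq relabel_perm) iota_uniq.
by rewrite -inorder_lmap Psi_inorder // shape_lmap.
Qed.
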